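(* Let $G$ be an edge-magic $(p,q)$-graph and $n\ge 1$. Let $\alpha$ and $\beta$ be the smallest and the largest valences of edge-magic labelings of $G$, respectively, and suppose $\beta-\alpha<(\alpha-(p+q+2))\,n$. Then for any orientations $\overrightarrow{G}$ of $G$ and $\overrightarrow{K}_{1,n}^l$ of $K_{1,n}^l$, $$|\tau_{\overrightarrow{G}\otimes\overrightarrow{K}_{1,n}^l}|\ \ge\ (n+3)\,|\tau_{G}|.$$
   Context: Graphs may have loops and multiple edges. A $(p,q)$-graph has $p$ vertices and $q$ edges. An edge-magic labeling of a $(p,q)$-graph $G$ is a bijection $f:V(G)\cup E(G)\to[1,p+q]$ such that $f(x)+f(xy)+f(y)$ equals a constant $\mathrm{val}(f)$ (the valence) for every edge $xy$; $G$ is edge-magic if it has one. For a graph $H$, the magic set $\tau_H$ is the set of integers that are valences of edge-magic labelings of $H$; for a digraph, $\tau$ refers to its underlying graph. $K_{1,n}^l$ is the star $K_{1,n}$ with a loop attached at its central vertex. For digraphs $D$ and $F$, $D\otimes F$ is the digraph with vertex set $V(D)\times V(F)$ and arcs $((a,i),(b,j))$ for every arc $(a,b)$ of $D$ and arc $(i,j)$ of $F$ (loops allowed). *)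

From mathcomp Require Import all_boot.
From Stdlib Require Import ClassicalEpsilon.
Set Implicit Arguments. Unset Strict Implicit. Unset Printing Implicit Defensive.

(* A (multi)graph with loops: finite vertex type V, finite edge type E, and
   each edge e has endpoints (ends e).1, (ends e).2 (a loop when equal).
   The same data read as ordered pairs is a digraph: arc e goes from
   (ends e).1 to (ends e).2. p = #|V|, q = #|E|. *)

Definition edge_magic {V E : finType} (ends : E -> V * V) (f : V + E -> nat) (k : nat) : Prop :=
  [/\ (forall x, 1 <= f x <= #|V| + #|E|),
      injective f,
      (forall m, 1 <= m <= #|V| + #|E| -> exists x, f x = m) &
      (forall e, f (inl (ends e).1) + f (inr e) + f (inl (ends e).2) = k)].

Definition tau {V E : finType} (ends : E -> V * V) (k : nat) : Prop :=
  exists f, edge_magic ends f k.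

Definition asbool (P : Prop) : bool :=
  if excluded_middle_informative P then true else false.

(* |tau_G|: every valence is <= 3(p+q) (when q >= 1), so count valences in [0, 3(p+q)]. *)
Definition tau_card {V E : finType} (ends : E -> V * V) : nat :=
  count (fun k => asbool (tau ends k)) (iota 0 (3 * (#|V| + #|E|)).+1).

Definition is_orientation {V E : finType} (ends o : E -> V * V) : Prop :=
  forall e, o e = ends e \/ o e = ((ends e).2, (ends e).1).

(* K_{1,n}^l : vertices 'I_n.+1 with center 0; edge 0 is the loop (0,0),
   edge i (1 <= i <= n) is the spoke (0,i). *)
Definition star_loop_ends (n : nat) (e : 'I_n.+1) : 'I_n.+1 * 'I_n.+1 := (ord0, e).

Definition tensor_ends {V1 E1 V2 E2 : finType} (oD : E1 -> V1 * V1) (oF : E2 -> V2 * V2)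
  (ef : E1 * E2) : (V1 * V2) * (V1 * V2) :=
  (((oD ef.1).1, (oF ef.2).1), ((oD ef.1).2, (oF ef.2).2)).

From mathcomp Require Import all_boot perm zify.
From Stdlib Require Import ClassicalEpsilon.
Set Implicit Arguments. Unset Strict Implicit. Unset Printing Implicit Defensive.

(* An edge-magic labeling f of G with valence k and a labeling g of the star
   combine into a labeling of the tensor product by reading the label of a
   pair as a two-digit number with digits f and g.  The star admits labelings
   mapping vertices and edges separately onto [0, n] with the centre labelled
   t, every arc summing to t + n.  With f as the low digit (radix p + q, the
   "lexicographic" labelings) we get the valences k + (p + q)(t + n), and keep
   t = 0 and t = n; with f as the high digit (radix n + 1, the "block"
   labelings) we get (k - 3)(n + 1) + t + n + 3 for every t.  The hypothesis
   on beta - alpha, together with alpha + beta <= 3 (p + q + 1) coming from the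
   complementary labeling, puts these n + 3 families into disjoint bands, so
   distinct valences of G yield (n + 3) times as many valences of the product. *)

Section EdgeMagic.
Variables (V E : finType) (ends : E -> V * V).

Lemma edge_magic_inj (f : V + E -> nat) k :
  (forall x, 1 <= f x <= #|V| + #|E|) -> injective f ->
  (forall e, f (inl (ends e).1) + f (inr e) + f (inl (ends e).2) = k) ->
  edge_magic ends f k.
Proof.
move=> f_range f_inj f_sum; split=> // m m_range.
have f_lt x : (f x).-1 < #|V| + #|E| by have := f_range x; lia.
pose g x : 'I_(#|V| + #|E|) := Ordinal (f_lt x).
have g_inj : injective g.
  move=> x y /(congr1 val) /= fxy; apply: f_inj.
  by have := f_range x; have := f_range y; lia.
have m_lt : m.-1 < #|V| + #|E| by lia.
have := @inj_card_onto _ _ _ g_inj _ (Ordinal m_lt).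
rewrite card_ord card_sum leqnn => /(_ isT) /codomP [x /(congr1 val) /= gx].
by exists x; have := f_range x; lia.
Qed.

Lemma orientation_sum (o : E -> V * V) (g : V -> nat) (h : E -> nat) e :
  is_orientation ends o ->
  g (o e).1 + h e + g (o e).2 = g (ends e).1 + h e + g (ends e).2.
Proof. by move=> /(_ e) [] -> /=; lia. Qed.

Lemma tau_orientation (o : E -> V * V) k :
  is_orientation ends o -> tau ends k -> tau o k.
Proof.
move=> ho [f [f_range f_inj f_onto f_sum]]; exists f; split=> // e.
by rewrite (orientation_sum (fun v => f (inl v)) (fun e => f (inr e)) e ho).
Qed.

(* Complementing every label, [x |-> p + q + 1 - x], is again edge-magic. *)
Lemma tau_dual k : tau ends k -> tau ends (3 * (#|V| + #|E|).+1 - k).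
Proof.
case=> f [f_range f_inj _ f_sum].
exists (fun x => (#|V| + #|E|).+1 - f x); apply: edge_magic_inj.
- by move=> x; have := f_range x; lia.
- by move=> x y fxy; apply: f_inj; have := f_range x; have := f_range y; lia.
- move=> e; rewrite -(f_sum e).
  by have := f_range (inl (ends e).1); have := f_range (inr e);
     have := f_range (inl (ends e).2); lia.
Qed.

End EdgeMagic.

Definition split_magic (V E : finType) (o : E -> V * V) (M : nat)
  (gv : V -> 'I_M) (ge : E -> 'I_M) (c : nat) : Prop :=
  [/\ injective gv, injective ge & forall e, gv (o e).1 + ge e + gv (o e).2 = c].

(* Sending the centre to [t], every spoke sums to [t + (n - g s) + g s]. *)
Lemma star_loop_split_magic n (oK : 'I_n.+1 -> 'I_n.+1 * 'I_n.+1) (t : 'I_n.+1) :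
  is_orientation (@star_loop_ends n) oK ->
  split_magic oK (tperm ord0 t) (fun s => rev_ord (tperm ord0 t s)) (t + n).
Proof.
move=> hoK; split; [exact: perm_inj | by move=> s s' /rev_ord_inj /perm_inj |].
move=> s; rewrite (orientation_sum (fun v : 'I_n.+1 => nat_of_ord (tperm ord0 t v))
                     (fun s => nat_of_ord (rev_ord (tperm ord0 t s))) s hoK).
by rewrite /= tpermL; have := ltn_ord (tperm ord0 t s); lia.
Qed.

Lemma addn_mul_inj B x y x' y' :
  x < B -> x' < B -> x + B * y = x' + B * y' -> x = x' /\ y = y'.
Proof.
move=> ltxB ltx'B exy; have B_gt0 : 0 < B by lia.
move: (congr1 (modn^~ B) exy) (congr1 (divn^~ B) exy) => /=.
rewrite ![_ + B * _]addnC ![B * _]mulnC !modnMDl !divnMDl // !modn_small //.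
by rewrite !divn_small // => -> ; rewrite !addn0.
Qed.

Definition mixed_radix (N M a b : nat) : Prop :=
  forall x y x' y', x < N -> y < M -> x' < N -> y' < M ->
  a * x + b * y < N * M /\ (a * x + b * y = a * x' + b * y' -> x = x' /\ y = y').

Lemma mixed_radix_1N N M : mixed_radix N M 1 N.
Proof.
move=> x y x' y' ltxN ltyM ltx'N _; split; first by nia.
by rewrite !mul1n; exact: addn_mul_inj.
Qed.

Lemma mixed_radix_M1 N M : mixed_radix N M M 1.
Proof.
move=> x y x' y' ltxN ltyM _ lty'M; split; first by nia.
by rewrite !mul1n ![_ + y]addnC ![_ + y']addnC => /addn_mul_inj[] // -> ->.
Qed.

Section TensorLabeling.
Variables (V1 E1 V2 E2 : finType) (oD : E1 -> V1 * V1) (oF : E2 -> V2 * V2).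
Variables (M : nat) (gv : V2 -> 'I_M) (ge : E2 -> 'I_M) (c : nat).
Hypotheses (cardV2 : #|V2| = M) (cardE2 : #|E2| = M).
Hypothesis gOK : split_magic oF gv ge c.

Let N := #|V1| + #|E1|.

Lemma tau_tensor_mixed_radix a b k :
  mixed_radix N M a b -> tau oD k -> tau (tensor_ends oD oF) (a * (k - 3) + b * c + 3).
Proof.
move=> radix [f [f_range f_inj _ f_sum]]; case: gOK => gv_inj ge_inj g_sum.
pose pair x y := a * x.-1 + b * y + 1.
have fpred_lt x : (f x).-1 < N by have := f_range x; rewrite /N; lia.
have pair_range x (y : 'I_M) : 1 <= pair (f x) y <= N * M.
  have [lt _] := radix _ _ _ _ (fpred_lt x) (ltn_ord y) (fpred_lt x) (ltn_ord y).
  by rewrite /pair addn1.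
have pair_inj x x' (y y' : 'I_M) : pair (f x) y = pair (f x') y' -> x = x' /\ y = y'.
  move=> /addIn /(radix _ _ _ _ (fpred_lt x) (ltn_ord y) (fpred_lt x') (ltn_ord y')).2 [fx fy].
  split; last exact: val_inj.
  by apply: f_inj; have := f_range x; have := f_range x'; lia.
pose F z := match z with
  | inl (v, i) => pair (f (inl v)) (gv i) | inr (e, s) => pair (f (inr e)) (ge s) end.
exists F; apply: edge_magic_inj.
- have -> : #|{: V1 * V2}| + #|{: E1 * E2}| = N * M.
    by rewrite !card_prod cardV2 cardE2 mulnDl.
  by case=> [[v i]|[e s]]; apply: pair_range.
- move=> [[v i]|[e s]] [[v' i']|[e' s']] /pair_inj [] // [->];
    by [move/gv_inj-> | move/ge_inj->].
- move=> [e s] /=; rewrite /pair -(f_sum e) -(g_sum s).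
  have := f_range (inl (oD e).2); have := f_range (inr e); have := f_range (inl (oD e).1).
  case: (f (inl (oD e).1)) => // x1 _; case: (f (inr e)) => // x2 _.
  case: (f (inl (oD e).2)) => // x3 _ /=.
  have -> : x1.+1 + x2.+1 + x3.+1 - 3 = x1 + x2 + x3 by lia.
  rewrite !mulnDr; lia.
Qed.

Lemma tau_tensor_lex k :
  3 <= k -> tau oD k -> tau (tensor_ends oD oF) (k + N * c).
Proof.
by move=> k_ge3 /(tau_tensor_mixed_radix (@mixed_radix_1N N M)); rewrite mul1n addnAC subnK.
Qed.

Lemma tau_tensor_block k :
  tau oD k -> tau (tensor_ends oD oF) ((k - 3) * M + c + 3).
Proof.
by move=> /(tau_tensor_mixed_radix (@mixed_radix_M1 N M)); rewrite mul1n mulnC.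
Qed.

End TensorLabeling.

Section Counting.
Variables (V E : finType) (ends : E -> V * V).

Definition valences : seq nat :=
  [seq k <- iota 0 (3 * (#|V| + #|E|)).+1 | asbool (tau ends k)].

Lemma tau_cardE : tau_card ends = size valences.
Proof. by rewrite /tau_card size_filter. Qed.

Lemma valencesP k : reflect (tau ends k /\ k <= 3 * (#|V| + #|E|)) (k \in valences).
Proof.
rewrite mem_filter mem_iota add0n ltnS /asbool.
case: excluded_middle_informative => hk /=; last by apply: ReflectF => -[].
by apply: (iffP idP) => [|[]].
Qed.

End Counting.

Lemma tau_card_mul_le (V1 E1 V2 E2 : finType) (ends1 : E1 -> V1 * V1) (ends2 : E2 -> V2 * V2)
    m (phi : nat -> 'I_m -> nat) :
  (forall k i, k \in valences ends1 -> phi k i \in valences ends2) ->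
  (forall k i k' i', k \in valences ends1 -> k' \in valences ends1 ->
     phi k i = phi k' i' -> k = k' /\ i = i') ->
  m * tau_card ends1 <= tau_card ends2.
Proof.
move=> phi_mem phi_inj; rewrite !tau_cardE mulnC -(size_enum_ord m) -(size_allpairs phi).
apply: uniq_leq_size.
- apply: allpairs_uniq; [exact: filter_uniq (iota_uniq _ _) | exact: enum_uniq |].
  move=> [k i] [k' i'] /allpairsP[[? ?] [/= hk _ [-> ->]]].
  by move=> /allpairsP[[? ?] [/= hk' _ [-> ->]]] /phi_inj[] // -> ->.
- by move=> _ /allpairsP[[k i] [/= hk _ ->]]; exact: phi_mem.
Qed.

(* [i = 0, 1]: lexicographic labelings with centre label [0], [n];
   [i >= 2]: block labeling with centre label [i - 2]. *)
Definition tensor_valence (N n k : nat) (i : 'I_(n + 3)) : nat :=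
  if i == 0 :> nat then k + N * n
  else if i == 1 :> nat then k + N * (n + n)
  else (k - 3) * n.+1 + (i - 2 + n) + 3.
Arguments tensor_valence : clear implicits.

(* Lexicographic with centre [0] < block < lexicographic with centre [n]. *)
Lemma tensor_valence_inj N n alpha beta k k' (i i' : 'I_(n + 3)) :
  1 <= n -> N + 2 < alpha -> alpha + beta <= 3 * N.+1 ->
  beta - alpha < (alpha - (N + 2)) * n ->
  alpha <= k <= beta -> alpha <= k' <= beta ->
  tensor_valence N n k i = tensor_valence N n k' i' -> k = k' /\ i = i'.
Proof.
move=> n_gt0 alpha_big sum_le gap range_k range_k' eqv.
have lex_lt_block : beta + N * n < (alpha - 3) * n.+1 + n + 3 by nia.
have block_lt_lex : (beta - 3) * n.+1 + n + n + 3 < alpha + N * (n + n) by nia.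
have block_mono j : alpha <= j <= beta ->
    (alpha - 3) * n.+1 <= (j - 3) * n.+1 <= (beta - 3) * n.+1.
  by move=> /andP[aj jb]; rewrite !leq_mul2r; apply/andP; split; apply/orP; right; lia.
have /andP[bk1 bk2] := block_mono _ range_k.
have /andP[bk'1 bk'2] := block_mono _ range_k'.
move: range_k range_k' => /andP[ak kb] /andP[ak' k'b].
suff [-> eqi] : k = k' /\ (i : nat) = i' by split=> //; exact: val_inj.
move: eqv; rewrite /tensor_valence; have := ltn_ord i'; have := ltn_ord i.
case: (i : nat) => [|[|d]] lti; case: (i' : nat) => [|[|d']] lti' /= eqv; try lia.
have [->] : d = d' /\ k - 3 = k' - 3.
  by apply: (@addn_mul_inj n.+1); rewrite ?[n.+1 * _]mulnC; lia.
lia.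
Qed.

Lemma tensor_valence_tau (V E : finType) (ends oG : E -> V * V) n
    (oK : 'I_n.+1 -> 'I_n.+1 * 'I_n.+1) k (i : 'I_(n + 3)) :
  is_orientation ends oG -> is_orientation (@star_loop_ends n) oK ->
  3 <= k -> tau ends k ->
  tau (tensor_ends oG oK) (tensor_valence (#|V| + #|E|) n k i).
Proof.
move=> hoG hoK k_ge3 /(tau_orientation hoG) hk.
have cardI : #|'I_n.+1| = n.+1 by rewrite card_ord.
have star t := star_loop_split_magic t hoK.
rewrite /tensor_valence; case: eqP => [_|i0].
  exact: (tau_tensor_lex cardI cardI (star ord0) k_ge3 hk).
case: eqP => [_|i1].
  exact: (tau_tensor_lex cardI cardI (star ord_max) k_ge3 hk).
have := tau_tensor_block cardI cardI (star (inord (i - 2))) hk.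
by rewrite inordK -?addnA //; have := ltn_ord i; lia.
Qed.

Theorem mainTheorem3 (V E : finType) (ends : E -> V * V) (n : nat) (hn : 1 <= n)
  (alpha beta : nat)
  (Halpha : tau ends alpha) (Hbeta : tau ends beta)
  (Hbounds : forall k, tau ends k -> alpha <= k <= beta)
  (Hineq : beta - alpha < (alpha - (#|V| + #|E| + 2)) * n)
  (oG : E -> V * V) (HoG : is_orientation ends oG)
  (oK : 'I_n.+1 -> 'I_n.+1 * 'I_n.+1) (HoK : is_orientation (@star_loop_ends n) oK) :
  (n + 3) * tau_card ends <= tau_card (tensor_ends oG oK).
Proof.
have alpha_big : #|V| + #|E| + 2 < alpha.
  by case: ltnP => // /eqP alpha_small; move: Hineq; rewrite alpha_small mul0n.
have sum_le : alpha + beta <= 3 * (#|V| + #|E|).+1.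
  by have /andP[+ _] := Hbounds _ (tau_dual Hbeta); lia.
apply: (@tau_card_mul_le _ _ _ _ _ _ _ (tensor_valence (#|V| + #|E|) n)).
- move=> k i /valencesP[hk k_le]; have /andP[ak kb] := Hbounds _ hk.
  apply/valencesP; split; first by apply: tensor_valence_tau; rewrite //; lia.
  rewrite !card_prod !card_ord /tensor_valence.
  have : (k - 3) * n.+1 <= (3 * (#|V| + #|E|) - 3) * n.+1.
    by rewrite leq_mul2r; apply/orP; right; lia.
  by have := ltn_ord i; case: eqP => _; [|case: eqP => _]; nia.
- move=> k i k' i' /valencesP[hk _] /valencesP[hk' _].
  exact: tensor_valence_inj hn alpha_big sum_le Hineq (Hbounds _ hk) (Hbounds _ hk').
Qed.
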